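(* Let $\Gamma=\langle x,y,z\mid xy^{-1}=yz^{-1},\ xy^{-1}=zx^{-1}\rangle$ with generating set $\Delta=\{x,y,z\}$. Then $W=W_xU_x+W_yU_y+W_zU_z$ is a homogeneous scalar quantum walk on $C_\Delta(\Gamma)$ if and only if, up to a global phase, $W_x=\tfrac13(1+e^{i\phi_1}+e^{i\phi_2})$, $W_y=\tfrac13(1+e^{2\pi i/3}e^{i\phi_1}+e^{-2\pi i/3}e^{i\phi_2})$, $W_z=\tfrac13(1+e^{-2\pi i/3}e^{i\phi_1}+e^{2\pi i/3}e^{i\phi_2})$ for some real $\phi_1,\phi_2$ (with these three values nonzero). In particular such a walk exists.
   Context: The Cayley graph $C_\Delta(\Gamma)$ has vertex set $\Gamma$ and directed edges $(g,g\delta)$, $g\in\Gamma,\delta\in\Delta$. Let $\ell^2(\Gamma)$ have orthonormal basis $\{|g\rangle\}_{g\in\Gamma}$ and for $\delta\in\Gamma$ let $U_\delta|g\rangle=|g\delta\rangle$. A homogeneous scalar quantum walk on $C_\Delta(\Gamma)$ is a unitary operator $W=\sum_{\delta\in\Delta}W_\delta U_\delta$ with all complex coefficients $W_\delta$ nonzero. ''Up to a global phase'' means that all coefficients may be multiplied by a common complex number of modulus one. *)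

From HB Require Import structures.
From mathcomp Require Import all_boot all_order all_algebra.
From mathcomp Require Import all_classical all_reals.
From mathcomp Require Import esum trigo.
From mathcomp Require Import complex.
From mathcomp Require Import Rstruct.

Set Implicit Arguments.
Unset Strict Implicit.
Unset Printing Implicit Defensive.

Import Order.TTheory GRing.Theory Num.Theory.
Local Open Scope ring_scope.
Local Open Scope complex_scope.

Notation RR := Rdefinitions.R.
Notation CC := (RR[i]).

Record group := Group {
  gcar :> Type;
  gmul : gcar -> gcar -> gcar;
  gone : gcar;
  ginv : gcar -> gcar;
  gmulA : forall a b c, gmul a (gmul b c) = gmul (gmul a b) c;
  gmul1g : forall a, gmul gone a = a;
  gmulVg : forall a, gmul (ginv a) a = gone }.

Definition ghom (G H : group) (f : G -> H) : Prop :=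
  forall u v : G, f (gmul u v) = gmul (f u) (f v).

Definition rels (G : group) (x y z : G) : Prop :=
  gmul x (ginv y) = gmul y (ginv z) /\ gmul x (ginv y) = gmul z (ginv x).

(* (G; x, y, z) is the group presented by < x, y, z | x y^-1 = y z^-1,
   x y^-1 = z x^-1 >: the relations hold, and the universal property of the
   presentation holds (every triple satisfying the relations in any group H
   is the image of (x, y, z) under a unique homomorphism). *)
Definition is_presentation (G : group) (x y z : G) : Prop :=
  rels x y z /\
  forall (H : group) (a b c : H), rels a b c ->
    exists f : G -> H,
      [/\ ghom f, f x = a, f y = b, f z = c &
        forall g : G -> H, ghom g -> g x = a -> g y = b -> g z = c ->
          forall u, g u = f u].

Definition sqn (w : CC) : RR := (@complex.Re RR w) ^+ 2 + (@complex.Im RR w) ^+ 2.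

Definition l2norm2 (G : group) (f : G -> CC) : \bar RR :=
  \esum_(g in [set: {classic (gcar G)}]) (sqn (f g))%:E.

Definition in_l2 (G : group) (f : G -> CC) : Prop := (l2norm2 f < +oo)%E.

Definition unitary_l2 (G : group) (T : (G -> CC) -> (G -> CC)) : Prop :=
  (forall f, in_l2 f -> in_l2 (T f) /\ l2norm2 (T f) = l2norm2 f) /\
  (forall g, in_l2 g -> exists f, in_l2 f /\ T f = g).

(* U_d |g> = |g d>, i.e. (U_d f)(h) = f (h d^-1) *)
Definition Uop (G : group) (d : G) (f : G -> CC) : G -> CC :=
  fun h => f (gmul h (ginv d)).

Definition Wop (G : group) (terms : seq (CC * G)) (f : G -> CC) : G -> CC :=
  fun h => \sum_(p <- terms) p.1 * Uop p.2 f h.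

Definition is_hsqw (G : group) (terms : seq (CC * G)) : Prop :=
  unitary_l2 (Wop terms) /\ all (fun p => p.1 != 0) terms.

Definition expi (t : RR) : CC := (cos t) +i* (sin t).

Definition third : CC := 3^-1.
Definition Wx_form (p1 p2 : RR) : CC := third * (1 + expi p1 + expi p2).
Definition Wy_form (p1 p2 : RR) : CC :=
  third * (1 + expi (2 * pi / 3) * expi p1 + expi (- (2 * pi / 3)) * expi p2).
Definition Wz_form (p1 p2 : RR) : CC :=
  third * (1 + expi (- (2 * pi / 3)) * expi p1 + expi (2 * pi / 3) * expi p2).

(* Put a = x y^-1.  The relations give a^3 = 1, and a <> 1 because the group
   maps onto Z/3 by x, y, z |-> 0, 1, 2.  As y^-1 = x^-1 a and z^-1 = x^-1 a^2,
   W is a right translation followed by V f(k) = Wx f(k) + Wy f(k a) + Wz f(k a^2),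
   which acts on each right coset {k, k a, k a^2} by the circulant matrix with
   first row (Wx, Wy, Wz).  Hence W is unitary iff this circulant is: necessity
   by testing V on functions supported on one coset, sufficiency by summing the
   coset identity over all k.  The circulant is unitary iff its eigenvalues
   Wx + Wy w^j + Wz w^2j (w = e^{2 pi i/3}) are unimodular; writing them as
   c, c e^{i phi2}, c e^{i phi1} and inverting the discrete Fourier transform
   gives the formulas. *)

From Pilot Require Import Defs.
From HB Require Import structures.
From mathcomp Require Import all_boot all_order all_algebra.
From mathcomp Require Import all_classical all_reals.
(* [trigo] comes after [Rstruct] so that [cosD], [sinD], ... are its lemmas. *)
From mathcomp Require Import esum complex Rstruct trigo.
From mathcomp Require Import ring lra.

Import Order.TTheory GRing.Theory Num.Theory.
Local Open Scope ring_scope.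
Local Open Scope complex_scope.

Local Notation "u ** v" := (gmul u v) (at level 40, left associativity).

Section GroupLemmas.
Context {G : group}.
Implicit Types u v : G.

Lemma gmulgV u : u ** ginv u = gone G.
Proof.
rewrite -[u ** ginv u]gmul1g -(gmulVg (ginv u)) -gmulA (gmulA (ginv u) u) gmulVg.
by rewrite gmul1g gmulVg.
Qed.

Lemma gmulg1 u : u ** gone G = u.
Proof. by rewrite -(gmulVg u) gmulA gmulgV gmul1g. Qed.

Lemma gmulgK v u : u ** v ** ginv v = u.
Proof. by rewrite -gmulA gmulgV gmulg1. Qed.

Lemma gmulgKV v u : u ** ginv v ** v = u.
Proof. by rewrite -gmulA gmulVg gmulg1. Qed.

Lemma gmulIg v : injective (fun u : G => u ** v).
Proof. by move=> u u' e; rewrite -(gmulgK v u) /= e gmulgK. Qed.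

End GroupLemmas.

(* Conjugation is written [conjc] throughout: inside ring operators [_^*] would
   parse as [Num.conj].  These restatements at [CC] keep the conjugates in a
   form that [ring] treats as atoms, which [rmorphD] and [rmorphM] do not. *)
Lemma conjcD (a b : CC) : conjc (a + b) = conjc a + conjc b. Proof. exact: rmorphD. Qed.
Lemma conjcM (a b : CC) : conjc (a * b) = conjc a * conjc b. Proof. exact: rmorphM. Qed.
Lemma conjcX (a : CC) n : conjc (a ^+ n) = conjc a ^+ n. Proof. exact: rmorphXn. Qed.

Lemma sqnC (w : CC) : (sqn w)%:C = w * conjc w.
Proof.
case: w => a b; apply/eqP; rewrite eq_complex /=.
by apply/andP; split; apply/eqP; rewrite /sqn /=; ring.
Qed.

Lemma sqn_ge0 (w : CC) : 0 <= sqn w.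
Proof. by rewrite addr_ge0 // sqr_ge0. Qed.

Lemma sqnM (v w : CC) : sqn (v * w) = sqn v * sqn w.
Proof. by case: v w => [a b] [c d]; rewrite /sqn /=; ring. Qed.

Definition unimodular (w : CC) : Prop := w * conjc w = 1.

Lemma sqn_eq1 (w : CC) : sqn w = 1 <-> unimodular w.
Proof. by rewrite /unimodular -sqnC; split=> [-> // | /complexI]. Qed.

Lemma sqn0 : sqn 0 = 0.
Proof. by rewrite /sqn /= expr0n addr0. Qed.

Lemma sqn1 : sqn 1 = 1.
Proof. by rewrite /sqn /= expr1n expr0n addr0. Qed.

Lemma sqn_eq1_neq0 (w : CC) : sqn w = 1 -> w != 0.
Proof. by apply: contra_eq_neq => ->; rewrite sqn0 eq_sym oner_eq0. Qed.

Definition circ_sqsum (A B C : CC) : CC := A * conjc A + B * conjc B + C * conjc C.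
Definition circ_cross (A B C : CC) : CC := A * conjc C + B * conjc A + C * conjc B.

(* [circ_sqsum = 1] and [circ_cross = 0] say that the rows of the circulant
   matrix [[A, B, C], [C, A, B], [B, C, A]] are orthonormal. *)
Definition unitary_circulant (A B C : CC) : Prop :=
  circ_sqsum A B C = 1 /\ circ_cross A B C = 0.

Lemma sqn3C (a b c : CC) :
  (sqn a + sqn b + sqn c)%:C = a * conjc a + b * conjc b + c * conjc c.
Proof. by rewrite -!sqnC -!rmorphD. Qed.

Lemma sqn_circ_rows (A B C u0 u1 u2 : CC) : unitary_circulant A B C ->
  sqn (A * u0 + B * u1 + C * u2) + sqn (A * u1 + B * u2 + C * u0)
    + sqn (A * u2 + B * u0 + C * u1) = sqn u0 + sqn u1 + sqn u2.
Proof.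
move=> [hs hu]; apply: complexI; rewrite !sqn3C.
transitivity (circ_sqsum A B C * (u0 * conjc u0 + u1 * conjc u1 + u2 * conjc u2)
  + circ_cross A B C * (u0 * conjc u2 + u1 * conjc u0 + u2 * conjc u1)
  + conjc (circ_cross A B C) * (conjc u0 * u2 + conjc u1 * u0 + conjc u2 * u1)).
  by rewrite /circ_sqsum /circ_cross !(conjcD, conjcM) !conjcK; ring.
by rewrite hs hu rmorph0 !mul0r !addr0 mul1r.
Qed.

Lemma unitary_circulant_conj (A B C : CC) :
  unitary_circulant A B C -> unitary_circulant (conjc A) (conjc C) (conjc B).
Proof.
rewrite /unitary_circulant /circ_sqsum /circ_cross !conjcK => -[hs hu].
by split; [rewrite -hs | rewrite -hu]; ring.
Qed.

(* The eigenvalue of the circulant matrix on the eigenvector (1, v, v^2), for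
   a cube root of unity v. *)
Definition circ_eigen (A B C v : CC) : CC := A + B * v + C * v ^+ 2.

Lemma circ_eigen_mulJ (A B C v : CC) : v ^+ 3 = 1 -> conjc v = v ^+ 2 ->
  circ_eigen A B C v * conjc (circ_eigen A B C v) =
  circ_sqsum A B C + v * circ_cross A B C + v ^+ 2 * conjc (circ_cross A B C).
Proof.
move=> v3 vJ; rewrite /circ_eigen /circ_sqsum /circ_cross.
rewrite !(conjcD, conjcM) !conjcK vJ; ring: v3.
Qed.

Lemma three_neq0 : (3 : CC) != 0.
Proof. by rewrite pnatr_eq0. Qed.

Lemma thirdK (X : CC) : third * (3 * X) = X.
Proof. by rewrite mulrA mulVf ?three_neq0 ?mul1r. Qed.

Section CubeRootOfUnity.
Context {w : CC}.
Hypotheses (w_sum : 1 + w + w ^+ 2 = 0) (w_conj : conjc w = w ^+ 2).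

Lemma cube_root_sqr : w ^+ 2 = - 1 - w.
Proof. by apply/eqP; rewrite -subr_eq0 -w_sum; apply/eqP; ring. Qed.

Lemma cube_root_exp3 : w ^+ 3 = 1.
Proof. have w2 := cube_root_sqr; ring: w2. Qed.

Lemma cube_root_powX k : (w ^+ k) ^+ 3 = 1.
Proof. by rewrite exprAC cube_root_exp3 expr1n. Qed.

Lemma cube_root_powJ k : conjc (w ^+ k) = (w ^+ k) ^+ 2.
Proof. by rewrite conjcX w_conj exprAC. Qed.

Lemma unitary_circulant_eigen A B C :
  unitary_circulant A B C <->
  [/\ unimodular (circ_eigen A B C 1), unimodular (circ_eigen A B C w)
    & unimodular (circ_eigen A B C (w ^+ 2))].
Proof.
have normE k := @circ_eigen_mulJ A B C _ (cube_root_powX k) (cube_root_powJ k).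
have := normE 0; have := normE 1; have := normE 2; rewrite expr0 expr1 => E2 E1 E0.
rewrite /unimodular E0 E1 E2 /unitary_circulant.
set s := circ_sqsum A B C; set t := circ_cross A B C.
split=> [[-> ->] | [h1 hw hw2]]; first by rewrite rmorph0 !mulr0 !addr0.
have w2 := cube_root_sqr.
(* The three identities are a discrete Fourier transform in [(s, t, conjc t)]. *)
split; apply: (mulfI three_neq0).
  transitivity ((s + 1 * t + 1 ^+ 2 * conjc t) + (s + w * t + w ^+ 2 * conjc t)
    + (s + w ^+ 2 * t + (w ^+ 2) ^+ 2 * conjc t)); first by ring: w2.
  by rewrite h1 hw hw2; ring.
transitivity ((s + 1 * t + 1 ^+ 2 * conjc t) + w ^+ 2 * (s + w * t + w ^+ 2 * conjc t)
  + w * (s + w ^+ 2 * t + (w ^+ 2) ^+ 2 * conjc t)); first by ring: w2.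
by rewrite h1 hw hw2 mulr0 !mulr1; ring: w2.
Qed.

Lemma unitary_circulant_param A B C :
  unitary_circulant A B C <->
  exists c e1 e2 : CC,
    [/\ unimodular c, unimodular e1, unimodular e2 &
     [/\ A = c * (third * (1 + e1 + e2)),
          B = c * (third * (1 + w * e1 + w ^+ 2 * e2)) &
          C = c * (third * (1 + w ^+ 2 * e1 + w * e2))]].
Proof.
have w2 := cube_root_sqr.
rewrite unitary_circulant_eigen /unimodular.
split=> [[h1 hw hw2] | [c [e1 [e2 [hc h1 h2 [hA hB hC]]]]]].
  have [eA eB eC] : [/\ 3 * A = circ_eigen A B C 1 + circ_eigen A B C w
                                 + circ_eigen A B C (w ^+ 2),
      3 * B = circ_eigen A B C 1 + w ^+ 2 * circ_eigen A B C w
              + w * circ_eigen A B C (w ^+ 2)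
    & 3 * C = circ_eigen A B C 1 + w * circ_eigen A B C w
              + w ^+ 2 * circ_eigen A B C (w ^+ 2)].
    by split; rewrite /circ_eigen; ring: w2.
  move: (circ_eigen A B C 1) (circ_eigen A B C w) (circ_eigen A B C (w ^+ 2))
    eA eB eC h1 hw hw2 => L1 Lw Lw2 eA eB eC h1 hw hw2.
  exists L1, (Lw2 * conjc L1), (Lw * conjc L1).
  split; rewrite ?conjcM ?conjcK; try by ring: h1 hw hw2.
  by split; [rewrite -[A]thirdK eA | rewrite -[B]thirdK eB | rewrite -[C]thirdK eC];
    ring: h1.
have [-> -> ->] : [/\ circ_eigen A B C 1 = c, circ_eigen A B C w = c * e2
                    & circ_eigen A B C (w ^+ 2) = c * e1].
  by rewrite /circ_eigen hA hB hC /third; split; field: w2.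
by rewrite !conjcM; split; ring: hc h1 h2.
Qed.

Lemma circ_isometry_unitary A B C :
  (forall u0 u1 u2 : CC, sqn (A * u0 + B * u1 + C * u2) + sqn (A * u1 + B * u2 + C * u0)
     + sqn (A * u2 + B * u0 + C * u1) = sqn u0 + sqn u1 + sqn u2) ->
  unitary_circulant A B C.
Proof.
move=> iso; have eigen_sqn v : v ^+ 3 = 1 -> sqn (circ_eigen A B C v) = 1.
  move=> v3; have := iso 1 v (v ^+ 2).
  have -> : A * 1 + B * v + C * v ^+ 2 = circ_eigen A B C v * 1 by rewrite /circ_eigen; ring.
  have -> : A * v + B * v ^+ 2 + C * 1 = circ_eigen A B C v * v.
    by rewrite /circ_eigen; ring: v3.
  have -> : A * v ^+ 2 + B * 1 + C * v = circ_eigen A B C v * v ^+ 2.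
    by rewrite /circ_eigen; ring: v3.
  have := sqn_ge0 v; have := sqn_ge0 (v ^+ 2); rewrite !sqnM sqn1; nra.
apply/unitary_circulant_eigen; split; apply/sqn_eq1/eigen_sqn.
- exact: expr1n.
- exact: cube_root_exp3.
- exact: cube_root_powX.
Qed.

End CubeRootOfUnity.

Lemma expiD (s t : RR) : expi (s + t) = expi s * expi t.
Proof.
rewrite /expi cosD sinD; apply/eqP; rewrite eq_complex /=.
by apply/andP; split; apply/eqP; ring.
Qed.

Lemma expiN (t : RR) : expi (- t) = conjc (expi t).
Proof. by rewrite /expi cosN sinN. Qed.

Lemma expi0 : expi 0 = 1.
Proof. by rewrite /expi cos0 sin0. Qed.

Lemma sqn_expi (t : RR) : sqn (expi t) = 1.
Proof. exact: cos2Dsin2. Qed.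

Lemma expi_pi : expi pi = -1.
Proof. by rewrite /expi cospi sinpi; apply/eqP; rewrite eq_complex /= oppr0 !eqxx. Qed.

Lemma expi_onto (e : CC) : sqn e = 1 -> exists t : RR, expi t = e.
Proof.
case: e => a b; rewrite /sqn /= => hab.
have a_itv : a \in `[-1, 1] by rewrite in_itv /=; apply/andP; split; nra.
have sin_acos : sin (acos a) = `|b|.
  by rewrite sin_acos // -sqrtr_sqr; congr Num.sqrt; lra.
case: (lerP 0 b) => b0.
  by exists (acos a); rewrite /expi acosK // sin_acos ger0_norm.
by exists (- acos a); rewrite /expi cosN sinN acosK // sin_acos ltr0_norm // opprK.
Qed.

Definition omega : CC := expi (2 * pi / 3).

Lemma omega_exp3 : omega ^+ 3 = 1.
Proof.
rewrite /omega !exprS expr0 mulr1 -!expiD.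
have -> : 2 * pi / 3 + (2 * pi / 3 + 2 * pi / 3) = pi *+ 2 :> RR by rewrite mulr2n; field.
by rewrite /expi cos2pi sin2pi.
Qed.

Lemma omega_neq1 : omega != 1.
Proof.
apply/eqP => /(congr1 (@complex.Im RR)) /=.
have : 0 < sin (2 * pi / 3 : RR).
  by apply: sin_gt0_pi; have := @pi_gt0 RR; rewrite !ltr_pdivrMr //; lra.
by move=> /gt_eqF /eqP.
Qed.

Lemma omega_sum : 1 + omega + omega ^+ 2 = 0.
Proof.
have : (omega - 1) * (1 + omega + omega ^+ 2) = 0.
  by transitivity (omega ^+ 3 - 1); [ring | rewrite omega_exp3 subrr].
by move/eqP; rewrite mulf_eq0 subr_eq0 (negbTE omega_neq1) => /eqP.
Qed.

Lemma omega_conj : conjc omega = omega ^+ 2.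
Proof.
have h : omega * conjc omega = 1 by apply/sqn_eq1/sqn_expi.
by rewrite -[LHS]mul1r -omega_exp3; ring: h.
Qed.

Lemma unitary_circulant_expi Wx Wy Wz :
  unitary_circulant Wx Wy Wz <->
  exists (c : CC) (phi1 phi2 : RR), sqn c = 1 /\
    Wx = c * Wx_form phi1 phi2 /\ Wy = c * Wy_form phi1 phi2 /\ Wz = c * Wz_form phi1 phi2.
Proof.
rewrite (unitary_circulant_param omega_sum omega_conj).
rewrite /Wx_form /Wy_form /Wz_form -/omega expiN -/omega omega_conj.
split=> [[c [e1 [e2 [/sqn_eq1 hc /sqn_eq1/expi_onto[p1 <-] /sqn_eq1/expi_onto[p2 <-]]]]]|].
  by move=> [-> -> ->]; exists c, p1, p2.
move=> [c [p1 [p2 [hc [-> [-> ->]]]]]].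
by exists c, (expi p1), (expi p2); split; try apply/sqn_eq1; rewrite ?sqn_expi.
Qed.

Section ExtendedSums.
Local Open Scope ereal_scope.

Lemma adde3_inj (x y : \bar RR) : 0 <= x -> 0 <= y -> x + x + x = y + y + y -> x = y.
Proof.
case: x => [x| |]; case: y => [y| |] //= _ _.
by rewrite -!EFinD => -[] h; congr EFin; lra.
Qed.

Lemma esum_dirac {T : choiceType} (t : T) (v : \bar RR) : 0 <= v ->
  \esum_(k in [set: T]) (if k == t then v else 0) = v.
Proof.
move=> v0; transitivity (\esum_(k in [set t]) v); last exact: esum_set1.
rewrite [RHS]esum_mkcond; apply: eq_esum => k _ /=.
by case: (eqVneq k t) => [->|kt]; [rewrite mem_set | rewrite memNset //; apply/eqP].
Qed.

Lemma esum_three_points {T : choiceType} (F : T -> \bar RR) (t0 t1 t2 : T) :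
  t0 != t1 -> t0 != t2 -> t1 != t2 -> (forall k, 0 <= F k) ->
  (forall k, k != t0 -> k != t1 -> k != t2 -> F k = 0) ->
  \esum_(k in [set: T]) F k = F t0 + F t1 + F t2.
Proof.
move=> t01 t02 t12 F_ge0 F_out.
have dirac_ge0 t k : 0 <= (if k == t then F t else 0) by case: ifP.
rewrite -(esum_dirac t0 _ (F_ge0 t0)) -(esum_dirac t1 _ (F_ge0 t1)).
rewrite -(esum_dirac t2 _ (F_ge0 t2)) -!esumD //; last by move=> k _; rewrite adde_ge0.
apply: eq_esum => k _.
case: (eqVneq k t0) => [->|k0]; first by rewrite (negbTE t01) (negbTE t02) !adde0.
case: (eqVneq k t1) => [->|k1]; first by rewrite (negbTE t12) add0e adde0.
case: (eqVneq k t2) => [->|k2]; first by rewrite !add0e.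
by rewrite F_out // !adde0.
Qed.

End ExtendedSums.

Section RightTranslation.
Context {G : group}.
Local Notation cG := {classic (gcar G)}.

Lemma esum_translr (d : G) (F : G -> \bar RR) :
  (\esum_(k in [set: cG]) F (k ** d) = \esum_(k in [set: cG]) F k)%E.
Proof.
rewrite [RHS](@reindex_esum _ cG cG setT setT (fun k => k ** d)) //.
by rewrite setTT_bijective; exists (fun k => k ** ginv d) => k; rewrite ?gmulgK ?gmulgKV.
Qed.

Lemma l2norm2_translr (d : G) (f : G -> CC) : l2norm2 (fun h => f (h ** d)) = l2norm2 f.
Proof. exact: (esum_translr d (fun k => (sqn (f k))%:E)). Qed.

Lemma unitary_l2_translr (T : (G -> CC) -> G -> CC) (d : G) :
  unitary_l2 (fun f h => T f (h ** d)) <-> unitary_l2 T.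
Proof.
rewrite /unitary_l2 /in_l2.
split=> -[iso onto]; split=> [f /iso | g hg]; rewrite ?l2norm2_translr //.
- have [|f [hf Tf]] := onto (fun h => g (h ** d)); first by rewrite l2norm2_translr.
  exists f; split=> //; apply: funext => h.
  by have := congr1 (fun F => F (h ** ginv d)) Tf; rewrite /= !gmulgKV.
- have [|f [hf Tf]] := onto (fun h => g (h ** ginv d)); first by rewrite l2norm2_translr.
  by exists f; split=> //; apply: funext => h; rewrite Tf /= gmulgK.
Qed.

End RightTranslation.

Section CubicOrbit.
Context {G : group}.
Variable a : G.
Hypothesis a3 : a ** a ** a = gone G.
Local Notation cG := {classic (gcar G)}.

Definition circ_op (A B C : CC) (f : G -> CC) (k : G) : CC :=
  A * f k + B * f (k ** a) + C * f (k ** a ** a).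

Lemma gmul_cube k : k ** a ** a ** a = k.
Proof. by rewrite -!gmulA [a ** (a ** a)]gmulA a3 gmulg1. Qed.

(* Summing over [k] the identity [sqn_circ_rows] at [(f k, f (k a), f (k a^2))]
   counts every term of both norms three times, by translation invariance. *)
Lemma circ_op_isometry A B C f :
  unitary_circulant A B C -> l2norm2 (circ_op A B C f) = l2norm2 f.
Proof.
move=> hU; rewrite /l2norm2.
have esum_orbit (F : G -> RR) : (forall k, 0 <= F k) ->
  (\esum_(k in [set: cG]) (F k + F (k ** a) + F (k ** a ** a))%:E =
   \esum_(k in [set: cG]) (F k)%:E + \esum_(k in [set: cG]) (F k)%:E
     + \esum_(k in [set: cG]) (F k)%:E)%E.
  move=> F_ge0; under eq_esum do rewrite !EFinD.
  rewrite !esumD => [|k _|k _|k _|k _]; rewrite ?lee_fin ?addr_ge0 //.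
  by rewrite (esum_translr a (fun k => (F (k ** a))%:E)) (esum_translr a (fun k => (F k)%:E)).
apply: adde3_inj; try by apply: esum_ge0 => k _; rewrite lee_fin sqn_ge0.
rewrite -!esum_orbit => [|k|k]; rewrite ?sqn_ge0 //.
apply: eq_esum => k _.
by rewrite /circ_op gmul_cube; congr EFin; apply: sqn_circ_rows.
Qed.

Lemma circ_opK A B C : unitary_circulant A B C ->
  cancel (circ_op (conjc A) (conjc C) (conjc B)) (circ_op A B C).
Proof.
move=> [hs hu] g; apply: funext => k; rewrite /circ_op !gmul_cube.
transitivity (circ_sqsum A B C * g k + circ_cross A B C * g (k ** a)
  + conjc (circ_cross A B C) * g (k ** a ** a)).
  by rewrite /circ_sqsum /circ_cross !(conjcD, conjcM) !conjcK; ring.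
by rewrite hs hu rmorph0 !mul0r !addr0 mul1r.
Qed.

Lemma unitary_circ_op A B C :
  unitary_circulant A B C -> unitary_l2 (circ_op A B C).
Proof.
move=> hU; split=> [f hf | g hg]; first by rewrite /in_l2 circ_op_isometry.
exists (circ_op (conjc A) (conjc C) (conjc B) g); split; last exact: circ_opK.
by rewrite /in_l2 circ_op_isometry //; apply: unitary_circulant_conj.
Qed.

Hypothesis a_neq1 : a <> gone G.

Lemma orbit_neq : [/\ gone G != a :> cG, gone G != a ** a :> cG & a != a ** a :> cG].
Proof.
split; apply/eqP => e; apply: a_neq1; first by rewrite e.
  by rewrite -[a]gmul1g {1}e a3.
by apply: (@gmulIg _ a); rewrite /= -e gmul1g.
Qed.

Definition on_orbit (f : G -> CC) : Prop :=
  forall k : cG, k != gone G -> k != a -> k != a ** a -> f k = 0.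

Lemma l2norm2_orbit f : on_orbit f ->
  l2norm2 f = (sqn (f (gone G)) + sqn (f a) + sqn (f (a ** a)))%:E.
Proof.
have [n01 n02 n12] := orbit_neq; move=> f_orb.
rewrite /l2norm2 (esum_three_points _ _ _ _ n01 n02 n12) => [|k|k k0 k1 k2].
- by rewrite !EFinD.
- by rewrite lee_fin sqn_ge0.
- by rewrite f_orb // /sqn /= expr0n addr0.
Qed.

Lemma off_orbit_mulr (k : cG) : k != gone G -> k != a -> k != a ** a ->
  [/\ k ** a != gone G :> cG, k ** a != a :> cG & k ** a != a ** a :> cG].
Proof.
move=> k0 k1 k2; split; apply/eqP => e.
- by move/eqP: k2; apply; apply: (@gmulIg _ a); rewrite /= e a3.
- by move/eqP: k0; apply; apply: (@gmulIg _ a); rewrite /= e gmul1g.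
- by move/eqP: k1; apply; apply: (@gmulIg _ a).
Qed.

Lemma circ_op_on_orbit A B C f : on_orbit f -> on_orbit (circ_op A B C f).
Proof.
move=> f_orb k k0 k1 k2; have [ka0 ka1 ka2] := off_orbit_mulr k k0 k1 k2.
have [kaa0 kaa1 kaa2] := off_orbit_mulr (k ** a) ka0 ka1 ka2.
by rewrite /circ_op !f_orb // !mulr0 !addr0.
Qed.

Definition orbit_fun (u0 u1 u2 : CC) (k : cG) : CC :=
  if k == gone G then u0 else if k == a then u1 else if k == a ** a then u2 else 0.

Lemma orbit_fun_on_orbit u0 u1 u2 : on_orbit (orbit_fun u0 u1 u2).
Proof. by move=> k k0 k1 k2; rewrite /orbit_fun (negbTE k0) (negbTE k1) (negbTE k2). Qed.

Lemma orbit_funE u0 u1 u2 : [/\ orbit_fun u0 u1 u2 (gone G) = u0,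
  orbit_fun u0 u1 u2 a = u1 & orbit_fun u0 u1 u2 (a ** a) = u2].
Proof.
have [n01 n02 n12] := orbit_neq.
rewrite /orbit_fun eqxx eq_sym (negbTE n01) eqxx eq_sym (negbTE n02).
by rewrite eq_sym (negbTE n12) eqxx.
Qed.

Lemma unitary_circ_opP A B C : unitary_l2 (circ_op A B C) <-> unitary_circulant A B C.
Proof.
split=> [[iso _] | ]; last exact: unitary_circ_op.
apply: (circ_isometry_unitary omega_sum omega_conj) => u0 u1 u2.
have f_orb := orbit_fun_on_orbit u0 u1 u2.
have [|_] := iso (orbit_fun u0 u1 u2); first by rewrite /in_l2 l2norm2_orbit // ltry.
rewrite (l2norm2_orbit _ (circ_op_on_orbit A B C _ f_orb)) (l2norm2_orbit _ f_orb).
rewrite /circ_op !gmul1g a3 gmul1g.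
by have [-> -> ->] := orbit_funE u0 u1 u2; case.
Qed.

End CubicOrbit.

Definition Z3_group : group :=
  @Defs.Group 'Z_3 (fun u v => u + v) 0 (fun u => - u) (@addrA _) (@add0r _) (@addNr _).

Section Presentation.
Variables (G : group) (x y z : G).

Lemma rels_cube : rels x y z ->
  x ** ginv y ** (x ** ginv y) ** (x ** ginv y) = gone G.
Proof.
move=> [r1 r2]; have a2 : x ** ginv y ** (x ** ginv y) = x ** ginv z.
  by rewrite {2}r1 gmulA gmulgKV.
by rewrite a2 r2 gmulA gmulgKV gmulgV.
Qed.

Lemma presentation_neq1 : is_presentation x y z -> x ** ginv y <> gone G.
Proof.
move=> [_ univ] e; have exy : x = y by rewrite -(gmulgKV y x) e gmul1g.
have rels012 : rels (0 : Z3_group) 1 2 by split; apply/eqP.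
have [f [_ fx fy _ _]] := univ Z3_group 0 1 2 rels012.
by move: fx; rewrite exy fy.
Qed.

Lemma Wop_circ_op Wx Wy Wz : rels x y z ->
  Wop [:: (Wx, x); (Wy, y); (Wz, z)] =
  (fun f h => circ_op (x ** ginv y) Wx Wy Wz f (h ** ginv x)).
Proof.
move=> [r1 _]; apply: funext => f; apply: funext => h.
have ey : h ** ginv x ** (x ** ginv y) = h ** ginv y by rewrite gmulA gmulgKV.
have ez : h ** ginv y ** (x ** ginv y) = h ** ginv z by rewrite r1 gmulA gmulgKV.
by rewrite /Wop !big_cons big_nil /Uop /circ_op /= addr0 addrA ey ez.
Qed.

Lemma unitary_walk3 Wx Wy Wz : is_presentation x y z ->
  unitary_l2 (Wop [:: (Wx, x); (Wy, y); (Wz, z)]) <-> unitary_circulant Wx Wy Wz.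
Proof.
move=> pres; have [xyz _] := pres.
rewrite (Wop_circ_op _ _ _ xyz); apply: iff_trans (unitary_l2_translr _ _) _.
exact: (unitary_circ_opP _ (rels_cube xyz) (presentation_neq1 pres)).
Qed.

Lemma is_hsqw_walk3P Wx Wy Wz : is_presentation x y z ->
  is_hsqw [:: (Wx, x); (Wy, y); (Wz, z)] <->
  exists (c : CC) (phi1 phi2 : RR),
    sqn c = 1 /\
    Wx_form phi1 phi2 != 0 /\ Wy_form phi1 phi2 != 0 /\ Wz_form phi1 phi2 != 0 /\
    Wx = c * Wx_form phi1 phi2 /\ Wy = c * Wy_form phi1 phi2 /\ Wz = c * Wz_form phi1 phi2.
Proof.
move=> pres; rewrite /is_hsqw /= andbT.
split=> [[/(unitary_walk3 _ _ _ pres)/unitary_circulant_expi] | ].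
  move=> [c [p1 [p2 [hc [-> [-> ->]]]]]] /and3P[nx ny nz].
  have neq0 F : c * F != 0 -> F != 0 by apply: contraNneq => ->; rewrite mulr0.
  by exists c, p1, p2; do !split=> //; apply: neq0.
move=> [c [p1 [p2 [hc [nx [ny [nz [eX [eY eZ]]]]]]]]]; split.
  by apply/(unitary_walk3 _ _ _ pres)/unitary_circulant_expi; exists c, p1, p2.
have c0 : c != 0 by exact: sqn_eq1_neq0.
by rewrite eX eY eZ; apply/and3P; split; apply: mulf_neq0.
Qed.

End Presentation.

Lemma Wforms_0_pi :
  [/\ Wx_form 0 pi = third, Wy_form 0 pi = - (2 * third) * omega ^+ 2
    & Wz_form 0 pi = - (2 * third) * omega].
Proof.
have w2 := cube_root_sqr omega_sum.
rewrite /Wx_form /Wy_form /Wz_form -/omega expiN -/omega omega_conj expi0 expi_pi.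
by split; ring: w2.
Qed.

Theorem mainTheorem4 :
  forall (G : group) (x y z : G), is_presentation x y z ->
  (forall Wx Wy Wz : CC,
     is_hsqw [:: (Wx, x); (Wy, y); (Wz, z)] <->
     exists (c : CC) (phi1 phi2 : RR),
       sqn c = 1 /\
       Wx_form phi1 phi2 != 0 /\ Wy_form phi1 phi2 != 0 /\ Wz_form phi1 phi2 != 0 /\
       Wx = c * Wx_form phi1 phi2 /\
       Wy = c * Wy_form phi1 phi2 /\
       Wz = c * Wz_form phi1 phi2)
  /\ (exists Wx Wy Wz : CC, is_hsqw [:: (Wx, x); (Wy, y); (Wz, z)]).
Proof.
move=> G x y z pres; split=> [Wx Wy Wz | ]; first exact: is_hsqw_walk3P.
exists (Wx_form 0 pi), (Wy_form 0 pi), (Wz_form 0 pi); apply/is_hsqw_walk3P => //.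
exists 1, 0, pi; rewrite !mul1r; have [-> -> ->] := Wforms_0_pi.
split; first exact: sqn1.
have third_neq0 : third != 0 by rewrite invr_eq0 three_neq0.
have omega_neq0 : omega != 0 by rewrite sqn_eq1_neq0 ?sqn_expi.
by do !split=> //; rewrite mulf_neq0 ?expf_neq0 // oppr_eq0 mulf_neq0 // pnatr_eq0.
Qed.
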